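(* Let $M$ be a compact Polish metric space, let $\bar a=(a_0,\dots,a_{p-1})$ and $\bar b=(b_0,\dots,b_{p-1})$ be tuples from $M$, and let $(A_n:n\in\omega)$ be a sequence of finite subsets of $M$ with $A_n\subseteq A_{n+1}$ and $\bigcup_{z\in A_n}B_{2^{-n}}(z)=M$ for all $n$. Suppose $(\varphi_n:n\in\omega)$ is a compact approximation system for $M,\bar a,\bar b$ with respect to $(A_n:n\in\omega)$. Then there is a bijective isometry $\Phi:M\to M$ with $\Phi(a_i)=b_i$ for all $i<p$.
   Context: $B_r(z)$ denotes the open ball of radius $r$ about $z$. A compact approximation system for $M,\bar a,\bar b$ with respect to $(A_n)$ is a sequence $(\varphi_n:n\in\omega)$ such that for every $n$: (i) $\varphi_n:A_n\to A_n$; (ii) for all $i<p$ and $z\in A_n$, $|d(a_i,z)-d(b_i,\varphi_n(z))|<2^{-n}$; (iii) for all $m\le n$, $y\in A_m$, $z\in A_n$, $|d(y,z)-d(\varphi_m(y),\varphi_n(z))|<2^{-m}+2^{-n}$; (iv) $\bigcup_{z\in A_n}B_{2^{-(n-1)}}(\varphi_n(z))=M$. *)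

From Stdlib Require Import Reals Lra Lia List.
Open Scope R_scope.

Definition is_metric {M : Type} (d : M -> M -> R) : Prop :=
  (forall x y, 0 <= d x y) /\
  (forall x y, d x y = 0 <-> x = y) /\
  (forall x y, d x y = d y x) /\
  (forall x y z, d x z <= d x y + d y z).

Definition ball_d {M : Type} (d : M -> M -> R) (z : M) (r : R) (y : M) : Prop :=
  d z y < r.

Definition open_d {M : Type} (d : M -> M -> R) (U : M -> Prop) : Prop :=
  forall x, U x -> exists r, 0 < r /\ forall y, ball_d d x r y -> U y.

Definition compact_d {M : Type} (d : M -> M -> R) : Prop :=
  forall (I : Type) (U : I -> M -> Prop),
    (forall i, open_d d (U i)) ->
    (forall x, exists i, U i x) ->
    exists l : list I, forall x, exists i, In i l /\ U i x.

(* Compact approximation system (phi_n) for M, a, b w.r.t. (A_n);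
   tuples a, b of length p are given as functions nat -> M used at i < p;
   2^{-n} is written / 2 ^ n and 2^{-(n-1)} as 2 / 2 ^ n. *)
Definition compact_approx_system {M : Type} (d : M -> M -> R) (p : nat)
  (a b : nat -> M) (A : nat -> list M) (phi : nat -> M -> M) : Prop :=
  (* (i) *)
  (forall n z, In z (A n) -> In (phi n z) (A n)) /\
  (* (ii) *)
  (forall n i z, (i < p)%nat -> In z (A n) ->
     Rabs (d (a i) z - d (b i) (phi n z)) < / 2 ^ n) /\
  (* (iii) *)
  (forall m n y z, (m <= n)%nat -> In y (A m) -> In z (A n) ->
     Rabs (d y z - d (phi m y) (phi n z)) < / 2 ^ m + / 2 ^ n) /\
  (* (iv) *)
  (forall n x, exists z, In z (A n) /\ ball_d d (phi n z) (2 / 2 ^ n) x).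

(* Pick z_n(x) in A_n within 2^-n of x.  Clause (iii) makes n |-> phi_n(z_n(x))
   a Cauchy sequence, and compactness gives it a limit Phi(x).  The same clause
   says that phi_n is within 2^-(n-1) of preserving distances, so Phi is an
   isometry, and clause (ii) forces Phi(a_i) = b_i.  For y in M, clause (iv)
   yields u_n in A_n with phi_n(u_n) -> y, and (iii) puts Phi(u_n) within 2^-n
   of phi_n(u_n); as Phi is an isometry, (u_n) is Cauchy and its limit is a
   preimage of y. *)
From Stdlib Require Import Reals List Lra Lia Classical ClassicalEpsilon.
Open Scope R_scope.

Lemma Un_cv_const r : Un_cv (fun _ => r) r.
Proof.
  intros eps Heps; exists 0%nat; intros n _.
  unfold R_dist; rewrite Rminus_diag, Rabs_R0; exact Heps.
Qed.

Lemma Un_cv_squeeze (u e : nat -> R) l :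
  (forall n, Rabs (u n - l) <= e n) -> Un_cv e 0 -> Un_cv u l.
Proof.
  intros Hue He eps Heps; destruct (He eps Heps) as [N HN]; exists N.
  intros n Hn; specialize (HN n Hn); unfold R_dist in *.
  rewrite Rminus_0_r in HN; pose proof (Hue n); pose proof (Rle_abs (e n)); lra.
Qed.

Lemma inv_pow2_le m n : (m <= n)%nat -> / 2 ^ n <= / 2 ^ m.
Proof.
  intro Hmn; apply Rinv_le_contravar; [apply pow_lt; lra |].
  apply Rle_pow; [lra | exact Hmn].
Qed.

Lemma Un_cv_scal_inv_pow2 C : Un_cv (fun n => C * / 2 ^ n) 0.
Proof.
  replace 0 with (C * 0) by ring; apply CV_mult; [apply Un_cv_const |].
  intros eps Heps.
  destruct (pow_lt_1_zero (/ 2) ltac:(rewrite Rabs_pos_eq; lra) eps Heps) as [N HN].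
  exists N; intros n Hn; unfold R_dist; rewrite Rminus_0_r, <- pow_inv; exact (HN n Hn).
Qed.

Section Metric.

Variables (M : Type) (d : M -> M -> R).
Hypothesis d_metric : is_metric d.

Lemma dist_ge0 x y : 0 <= d x y.
Proof. apply d_metric. Qed.

Lemma dist_eq0 x y : d x y = 0 -> x = y.
Proof. apply d_metric. Qed.

Lemma dist_xx x : d x x = 0.
Proof. apply d_metric; reflexivity. Qed.

Lemma dist_sym x y : d x y = d y x.
Proof. apply d_metric. Qed.

Lemma dist_triangle x y z : d x z <= d x y + d y z.
Proof. apply d_metric. Qed.

Lemma dist_diff_le x y x' y' : Rabs (d x y - d x' y') <= d x x' + d y y'.
Proof.
  pose proof (dist_triangle x x' y); pose proof (dist_triangle x' y' y).
  pose proof (dist_triangle x' x y'); pose proof (dist_triangle x y y').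
  rewrite (dist_sym x' x), (dist_sym y' y) in *.
  apply Rabs_le; lra.
Qed.

Definition converges_to (x : nat -> M) (L : M) : Prop :=
  Un_cv (fun n => d (x n) L) 0.

Definition cauchy (x : nat -> M) : Prop :=
  forall eps, 0 < eps -> exists N, forall m n,
    (N <= m)%nat -> (N <= n)%nat -> d (x m) (x n) < eps.

Lemma converges_to_of_dist_le (x : nat -> M) L (e : nat -> R) :
  (forall n, d (x n) L <= e n) -> Un_cv e 0 -> converges_to x L.
Proof.
  intro Hle; apply Un_cv_squeeze; intro n.
  rewrite Rminus_0_r, Rabs_pos_eq; [apply Hle | apply dist_ge0].
Qed.

Lemma Un_cv_dist x y L L' :
  converges_to x L -> converges_to y L' ->
  Un_cv (fun n => d (x n) (y n)) (d L L').
Proof.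
  intros HxL HyL'; apply (Un_cv_squeeze _ (fun n => d (x n) L + d (y n) L')).
  - intro n; apply dist_diff_le.
  - replace 0 with (0 + 0) by ring; apply CV_plus; assumption.
Qed.

Lemma converges_to_unique x L L' :
  converges_to x L -> converges_to x L' -> L = L'.
Proof.
  intros HL HL'; apply dist_eq0.
  apply (UL_sequence (fun n => d (x n) (x n))); [apply Un_cv_dist; assumption |].
  intros eps Heps; exists 0%nat; intros n _.
  unfold R_dist; rewrite dist_xx, Rminus_0_r, Rabs_R0; exact Heps.
Qed.

Lemma dist_le_of_converges_to x L y c (e : nat -> R) N :
  converges_to x L -> Un_cv e 0 ->
  (forall k, (N <= k)%nat -> d y (x k) <= c + e k) -> d y L <= c.
Proof.
  intros HxL He Hle; replace c with (c + 0 + 0) by ring.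
  apply (@Rle_cv_lim (fun _ => d y L) (fun k => c + e (k + N)%nat + d (x (k + N)%nat) L)).
  - intro k; pose proof (dist_triangle y (x (k + N)%nat) L).
    pose proof (Hle (k + N)%nat ltac:(lia)); lra.
  - apply Un_cv_const.
  - apply CV_plus; [apply CV_plus; [apply Un_cv_const |] |].
    + exact (CV_shift' e N 0 He).
    + exact (CV_shift' (fun n => d (x n) L) N 0 HxL).
Qed.

Lemma converges_to_cauchy x L : converges_to x L -> cauchy x.
Proof.
  intros HxL eps Heps; destruct (HxL (eps / 2) ltac:(lra)) as [N HN]; exists N.
  intros m n Hm Hn; specialize (HN m Hm) as Hm'; specialize (HN n Hn) as Hn'.
  unfold R_dist in Hm', Hn'; rewrite Rminus_0_r, Rabs_pos_eq in Hm', Hn' by apply dist_ge0.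
  pose proof (dist_triangle (x m) L (x n)); rewrite (dist_sym L) in *; lra.
Qed.

Lemma cauchy_of_dist_le x (e : nat -> R) :
  Un_cv e 0 -> (forall m n, (m <= n)%nat -> d (x m) (x n) <= e m) -> cauchy x.
Proof.
  intros He Hle eps Heps; destruct (He eps Heps) as [N HN]; exists N.
  assert (Hlt : forall m, (N <= m)%nat -> e m < eps).
  { intros m Hm; specialize (HN m Hm); unfold R_dist in HN.
    rewrite Rminus_0_r in HN; pose proof (Rle_abs (e m)); lra. }
  intros m n Hm Hn; destruct (Nat.le_ge_cases m n) as [Hmn | Hnm].
  - pose proof (Hle m n Hmn); pose proof (Hlt m Hm); lra.
  - rewrite dist_sym; pose proof (Hle n m Hnm); pose proof (Hlt n Hn); lra.
Qed.

Definition cluster_point (x : nat -> M) (y : M) : Prop :=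
  forall eps N, 0 < eps -> exists n, (N <= n)%nat /\ d (x n) y < eps.

Lemma compact_cluster_point x : compact_d d -> exists y, cluster_point x y.
Proof.
  intro Hcomp; apply NNPP; intro Hnone.
  set (far := fun N y => exists eps, 0 < eps /\ forall n, (N <= n)%nat -> eps <= d (x n) y).
  destruct (Hcomp nat far) as [l Hl].
  - intros N y [eps [Heps Hfar]]; exists (eps / 2); split; [lra |].
    intros z Hyz; exists (eps / 2); split; [lra |]; intros n Hn.
    unfold ball_d in Hyz; pose proof (Hfar n Hn); pose proof (dist_triangle (x n) z y).
    rewrite (dist_sym z y) in *; lra.
  - intro y; apply NNPP; intro Hnot; apply Hnone; exists y; intros eps N Heps.
    apply NNPP; intro Hnear; apply Hnot; exists N, eps; split; [exact Heps |].
    intros n Hn; apply Rnot_lt_le; intro Hlt; apply Hnear; exists n; split; assumption.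
  - destruct (Hl (x (list_max l))) as [N [HN [eps [Heps Hfar]]]].
    assert (HNmax : (N <= list_max l)%nat).
    { apply (proj1 (Forall_forall _ l) (proj1 (list_max_le l _) (le_n _))); exact HN. }
    specialize (Hfar _ HNmax); rewrite dist_xx in Hfar; lra.
Qed.

Lemma cauchy_cluster_point_limit x y :
  cauchy x -> cluster_point x y -> converges_to x y.
Proof.
  intros Hc Hcl eps Heps; destruct (Hc (eps / 2) ltac:(lra)) as [N HN].
  destruct (Hcl (eps / 2) N ltac:(lra)) as [n [Hn Hny]]; exists N; intros m Hm.
  unfold R_dist; rewrite Rminus_0_r, Rabs_pos_eq by apply dist_ge0.
  pose proof (HN m n Hm Hn); pose proof (dist_triangle (x m) (x n) y); lra.
Qed.

Lemma compact_cauchy_converges x :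
  compact_d d -> cauchy x -> exists L, converges_to x L.
Proof.
  intros Hcomp Hc; destruct (compact_cluster_point x Hcomp) as [y Hy].
  exists y; exact (cauchy_cluster_point_limit x y Hc Hy).
Qed.

Section Isometry.

Variable f : M -> M.
Hypothesis f_isometry : forall x y, d (f x) (f y) = d x y.

Lemma isometry_injective x y : f x = f y -> x = y.
Proof. intro Hf; apply dist_eq0; rewrite <- f_isometry, Hf; apply dist_xx. Qed.

Lemma isometry_converges_to x L :
  converges_to x L -> converges_to (fun n => f (x n)) (f L).
Proof.
  intros HxL eps Heps; destruct (HxL eps Heps) as [N HN]; exists N.
  intros n Hn; rewrite f_isometry; exact (HN n Hn).
Qed.

Lemma cauchy_isometry_image x : cauchy (fun n => f (x n)) -> cauchy x.
Proof.
  intros Hc eps Heps; destruct (Hc eps Heps) as [N HN]; exists N.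
  intros m n Hm Hn; rewrite <- f_isometry; exact (HN m n Hm Hn).
Qed.

End Isometry.

Section ApproximationSystem.

Variables (p : nat) (a b : nat -> M) (A : nat -> list M) (phi : nat -> M -> M).
Hypothesis phi_interpolates : forall n i z, (i < p)%nat -> In z (A n) ->
  Rabs (d (a i) z - d (b i) (phi n z)) < / 2 ^ n.
Hypothesis phi_almost_isometric : forall m n y z, (m <= n)%nat -> In y (A m) ->
  In z (A n) -> Rabs (d y z - d (phi m y) (phi n z)) < / 2 ^ m + / 2 ^ n.
Hypothesis phi_almost_onto : forall n x, exists z, In z (A n) /\ ball_d d (phi n z) (2 / 2 ^ n) x.

Variable near : nat -> M -> M.
Hypothesis near_in : forall n x, In (near n x) (A n).
Hypothesis near_dist : forall n x, d (near n x) x < / 2 ^ n.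

Definition approx (x : M) (n : nat) : M := phi n (near n x).

Lemma approx_cauchy x : cauchy (approx x).
Proof.
  apply (cauchy_of_dist_le _ (fun m => 4 * / 2 ^ m)); [apply Un_cv_scal_inv_pow2 |].
  intros m n Hmn.
  pose proof (phi_almost_isometric m n _ _ Hmn (near_in m x) (near_in n x)) as Hphi.
  apply Rabs_def2 in Hphi.
  pose proof (dist_triangle (near m x) x (near n x)); rewrite (dist_sym x) in *.
  pose proof (near_dist m x); pose proof (near_dist n x); pose proof (inv_pow2_le m n Hmn).
  unfold approx; lra.
Qed.

Lemma approx_dist_close x y n :
  Rabs (d (approx x n) (approx y n) - d x y) <= 4 * / 2 ^ n.
Proof.
  pose proof (phi_almost_isometric n n _ _ (le_n n) (near_in n x) (near_in n y)) as Hphi.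
  pose proof (dist_diff_le (near n x) (near n y) x y) as Hnear.
  pose proof (near_dist n x); pose proof (near_dist n y).
  unfold approx; set (dz := d (near n x) (near n y)) in *.
  replace (_ - d x y) with ((d (phi n (near n x)) (phi n (near n y)) - dz) + (dz - d x y))
    by ring.
  rewrite Rabs_minus_sym in Hphi; eapply Rle_trans; [apply Rabs_triang | lra].
Qed.

Variable Phi : M -> M.
Hypothesis approx_to_Phi : forall x, converges_to (approx x) (Phi x).

Lemma Phi_isometry x y : d (Phi x) (Phi y) = d x y.
Proof.
  apply (UL_sequence (fun n => d (approx x n) (approx y n))).
  - apply Un_cv_dist; apply approx_to_Phi.
  - apply (Un_cv_squeeze _ _ _ (approx_dist_close x y)), Un_cv_scal_inv_pow2.
Qed.

Lemma Phi_interpolates i : (i < p)%nat -> Phi (a i) = b i.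
Proof.
  intro Hi; symmetry; apply dist_eq0, Rle_antisym; [| apply dist_ge0].
  apply (dist_le_of_converges_to (approx (a i)) _ _ 0 (fun n => 2 * / 2 ^ n) 0);
    [apply approx_to_Phi | apply Un_cv_scal_inv_pow2 |].
  intros n _; pose proof (phi_interpolates n i _ Hi (near_in n (a i))) as Hphi.
  apply Rabs_def2 in Hphi; pose proof (near_dist n (a i)) as Hnear.
  rewrite dist_sym in Hnear; unfold approx; lra.
Qed.

Lemma phi_near_Phi n z : In z (A n) -> d (phi n z) (Phi z) <= / 2 ^ n.
Proof.
  intro Hz.
  apply (dist_le_of_converges_to (approx z) _ _ _ (fun k => 2 * / 2 ^ k) n);
    [apply approx_to_Phi | apply Un_cv_scal_inv_pow2 |].
  intros k Hk; pose proof (phi_almost_isometric n k _ _ Hk Hz (near_in k z)) as Hphi.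
  apply Rabs_def2 in Hphi; pose proof (near_dist k z); rewrite (dist_sym z) in *.
  unfold approx; lra.
Qed.

Hypothesis d_compact : compact_d d.

Lemma Phi_surjective y : exists x, Phi x = y.
Proof.
  destruct (choice (fun n z => In z (A n) /\ ball_d d (phi n z) (2 / 2 ^ n) y)
    (fun n => phi_almost_onto n y)) as [u Hu].
  assert (HPhi_u : converges_to (fun n => Phi (u n)) y).
  { apply (converges_to_of_dist_le _ _ (fun n => 3 * / 2 ^ n)); [| apply Un_cv_scal_inv_pow2].
    intro n; destruct (Hu n) as [Hun Huy]; unfold ball_d, Rdiv in Huy.
    pose proof (phi_near_Phi n _ Hun); pose proof (dist_triangle (Phi (u n)) (phi n (u n)) y).
    rewrite (dist_sym (Phi (u n)) (phi n (u n))) in *; lra. }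
  destruct (compact_cauchy_converges u d_compact) as [x Hx].
  { apply (cauchy_isometry_image Phi Phi_isometry).
    exact (converges_to_cauchy _ _ HPhi_u). }
  exists x; apply (converges_to_unique (fun n => Phi (u n))); [| exact HPhi_u].
  exact (isometry_converges_to Phi Phi_isometry u x Hx).
Qed.

End ApproximationSystem.

End Metric.

Theorem lemma3p2 (M : Type) (d : M -> M -> R) (p : nat) (a b : nat -> M)
  (A : nat -> list M) (phi : nat -> M -> M) :
  is_metric d ->
  compact_d d ->
  (forall n x, In x (A n) -> In x (A (S n))) ->
  (forall n x, exists z, In z (A n) /\ ball_d d z (/ 2 ^ n) x) ->
  compact_approx_system d p a b A phi ->
  exists Phi : M -> M,
    (forall x y, Phi x = Phi y -> x = y) /\
    (forall y, exists x, Phi x = y) /\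
    (forall x y, d (Phi x) (Phi y) = d x y) /\
    (forall i, (i < p)%nat -> Phi (a i) = b i).
Proof.
  intros Hmet Hcomp _ Hdense [_ [Hab [Hclose Honto]]].
  destruct (choice (fun n (f : M -> M) => forall x, In (f x) (A n) /\ d (f x) x < / 2 ^ n))
    as [near Hnear].
  { intro n; exact (choice (fun x z => In z (A n) /\ d z x < / 2 ^ n) (Hdense n)). }
  pose proof (fun n x => proj1 (Hnear n x)) as near_in.
  pose proof (fun n x => proj2 (Hnear n x)) as near_dist.
  destruct (choice (fun x L => converges_to M d (approx M phi near x) L)) as [Phi HPhi].
  { intro x; apply (compact_cauchy_converges M d Hmet _ Hcomp).
    exact (approx_cauchy M d Hmet A phi Hclose near near_in near_dist x). }
  assert (Phi_iso := Phi_isometry M d Hmet A phi Hclose near near_in near_dist Phi HPhi).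
  exists Phi; split; [| split; [| split]].
  - exact (isometry_injective M d Hmet Phi Phi_iso).
  - exact (Phi_surjective M d Hmet A phi Hclose Honto near near_in near_dist Phi HPhi Hcomp).
  - exact Phi_iso.
  - exact (Phi_interpolates M d Hmet p a b A phi Hab near near_in near_dist Phi HPhi).
Qed.
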